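(* Let $(X,f)$ be a dynamical system and let $S\subset X$ be an uncountable syndetically scrambled set for $f$ such that for every nonempty open $U\subset X$ there is $n\in\mathbb N$ with $f^n(S)\subset f^n(U)$. Then $f$ has a c-dense syndetically scrambled set $T$. If $S$ is moreover a Cantor set, then $T$ can be chosen to be a dense Mycielski set. Moreover, if $S$ is syndetically $\varepsilon$-scrambled, then $T$ is syndetically $\varepsilon$-scrambled.
   Context: Dynamical system: compact metric space $X$ with metric $d$ and continuous $f$. $T\subset X$ is c-dense if $T\cap U$ is uncountable for every nonempty open $U$. Syndetic: subset of $\mathbb N$ meeting every set with arbitrarily long runs of consecutive integers. $\mathrm{Asy}(f)=\{(x,y):d(f^nx,f^ny)\to0\}$, $\mathrm{SProx}(f)=\{(x,y):\{n:d(f^nx,f^ny)<\eta\}$ syndetic for all $\eta>0\}$. A syndetically scrambled set has at least two points and all distinct pairs in $\mathrm{SProx}(f)\setminus\mathrm{Asy}(f)$; it is syndetically $\varepsilon$-scrambled if also $\limsup_n d(f^nx,f^ny)\ge\varepsilon$ for all distinct $x,y$ in it. Cantor set: nonempty compact perfect totally disconnected; Mycielski set: countable union of Cantor sets. *)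

From Stdlib Require Import Reals List.
Open Scope R_scope.

Section Defs.
Context {X : Type}.
Variable d : X -> X -> R.

Definition is_metric : Prop :=
  (forall x y, 0 <= d x y) /\ (forall x y, d x y = 0 <-> x = y) /\
  (forall x y, d x y = d y x) /\ (forall x y z, d x z <= d x y + d y z).

Definition is_open (U : X -> Prop) : Prop :=
  forall x, U x -> exists r, 0 < r /\ forall y, d x y < r -> U y.

Definition is_closed (K : X -> Prop) : Prop := is_open (fun x => ~ K x).

Definition is_compact (K : X -> Prop) : Prop :=
  forall (I : Type) (G : I -> X -> Prop),
    (forall i, is_open (G i)) -> (forall x, K x -> exists i, G i x) ->
    exists l : list I, forall x, K x -> exists i, In i l /\ G i x.

Definition continuous (f : X -> X) : Prop :=
  forall x eps, 0 < eps -> exists delta, 0 < delta /\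
    forall y, d x y < delta -> d (f x) (f y) < eps.

Definition countable_set (A : X -> Prop) : Prop :=
  exists g : X -> nat, forall x y, A x -> A y -> g x = g y -> x = y.

Definition uncountable_set (A : X -> Prop) : Prop := ~ countable_set A.

Definition nonempty (A : X -> Prop) : Prop := exists x, A x.

Definition dense (T : X -> Prop) : Prop :=
  forall U, is_open U -> nonempty U -> exists x, U x /\ T x.

Definition c_dense (T : X -> Prop) : Prop :=
  forall U, is_open U -> nonempty U -> uncountable_set (fun x => T x /\ U x).

Definition connected_set (A : X -> Prop) : Prop :=
  ~ exists U V, is_open U /\ is_open V /\
      (exists a, A a /\ U a) /\ (exists b, A b /\ V b) /\
      (forall x, A x -> U x \/ V x) /\ (forall x, A x -> U x -> V x -> False).

Definition totally_disconnected (K : X -> Prop) : Prop :=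
  forall A, (forall x, A x -> K x) -> connected_set A ->
    forall x y, A x -> A y -> x = y.

Definition perfect (K : X -> Prop) : Prop :=
  is_closed K /\
  forall x, K x -> forall r, 0 < r -> exists y, K y /\ y <> x /\ d x y < r.

Definition cantor_set (K : X -> Prop) : Prop :=
  nonempty K /\ is_compact K /\ perfect K /\ totally_disconnected K.

Definition mycielski_set (T : X -> Prop) : Prop :=
  exists C : nat -> X -> Prop, (forall k, cantor_set (C k)) /\
    forall x, T x <-> exists k, C k x.

Definition thick (B : nat -> Prop) : Prop :=
  forall L : nat, exists m, forall i, (i < L)%nat -> B (m + i)%nat.

Definition syndetic (A : nat -> Prop) : Prop :=
  forall B, thick B -> exists n, A n /\ B n.

Variable f : X -> X.

Definition orbit_dist (x y : X) (n : nat) : R :=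
  d (Nat.iter n f x) (Nat.iter n f y).

Definition asymptotic (x y : X) : Prop := Un_cv (orbit_dist x y) 0.

Definition synd_proximal (x y : X) : Prop :=
  forall eta, 0 < eta -> syndetic (fun n => orbit_dist x y n < eta).

Definition synd_scrambled (S : X -> Prop) : Prop :=
  (exists x y, S x /\ S y /\ x <> y) /\
  forall x y, S x -> S y -> x <> y -> synd_proximal x y /\ ~ asymptotic x y.

Definition limsup_ge (a : nat -> R) (eps : R) : Prop :=
  forall delta, 0 < delta -> forall N, exists n, (N <= n)%nat /\ eps - delta < a n.

Definition synd_eps_scrambled (S : X -> Prop) (eps : R) : Prop :=
  synd_scrambled S /\
  forall x y, S x -> S y -> x <> y -> limsup_ge (orbit_dist x y) eps.

End Defs.

(* Fix a countable base of closed balls B_k.  Split S into pairwise disjoint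
   uncountable pieces A_k (closed when S is), by repeatedly cutting off the
   inside of a sphere that separates two uncountable parts.  The hypothesis gives
   a time n_k with f^{n_k}(S) inside f^{n_k}(B_k); an "iterate copy" T_k of A_k
   in B_k is a set on which f^{n_k} is injective and lands in f^{n_k}(A_k).
   Pairs of points of the union T of the T_k eventually follow pairs of
   distinct points of S, and syndetic proximality, non-asymptoticity and
   limsup bounds depend only on the tail of the orbit, so T inherits them; T is
   c-dense since each T_k is uncountable (f^n is injective on a scrambled set).
   When S is a Cantor set, a Cantor scheme inside the closed set of points of
   B_k whose n_k-th iterate lies in f^{n_k}(A_k) gives a Cantor set T_k, so T
   is a dense Mycielski set. *)

From Stdlib Require Import Reals List Lra Lia Classical ClassicalEpsilon Cantor.
Open Scope R_scope.

Lemma inv_succ_pos n : 0 < / (INR n + 1).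
Proof. apply Rinv_0_lt_compat. pose proof (pos_INR n); lra. Qed.

Lemma inv_succ_anti n m : (n <= m)%nat -> / (INR m + 1) <= / (INR n + 1).
Proof.
  intros h. apply Rinv_le_contravar; [pose proof (pos_INR n); lra|].
  apply le_INR in h; lra.
Qed.

Lemma inv_succ_small eps : 0 < eps -> exists n : nat, / (INR n + 1) < eps.
Proof.
  intros he. destruct (archimed_cor1 eps he) as [N [h1 h2]]. exists N.
  apply Rle_lt_trans with (/ INR N); auto.
  apply Rinv_le_contravar; [apply lt_0_INR|]; auto; lra.
Qed.

(* A finite list of indices is dominated by its maximum; this turns a finite
   subcover of an increasing family into a single member of the family. *)
Lemma le_list_max n l : In n l -> (n <= list_max l)%nat.
Proof.
  intros h. exact (proj1 (Forall_forall _ l) (proj1 (list_max_le l _) (le_n _)) n h).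
Qed.

Section Metric.
Context {X : Type} (d : X -> X -> R) (Hd : is_metric d).

Lemma d_nonneg x y : 0 <= d x y. Proof. apply Hd. Qed.
Lemma d_refl x : d x x = 0. Proof. apply Hd. reflexivity. Qed.
Lemma d_sym x y : d x y = d y x. Proof. apply Hd. Qed.
Lemma d_triangle x y z : d x z <= d x y + d y z. Proof. apply Hd. Qed.

Lemma d_triangle_center c y z : d y z <= d c y + d c z.
Proof. rewrite (d_sym c y). apply d_triangle. Qed.

Lemma d_pos x y : x <> y -> 0 < d x y.
Proof.
  intros ne. destruct (d_nonneg x y) as [h|h]; auto.
  exfalso. apply ne, Hd. auto.
Qed.

Lemma open_ball c r : is_open d (fun y => d c y < r).
Proof.
  intros x hx. exists (r - d c x); split; [lra|].
  intros y hy. pose proof (d_triangle c x y); lra.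
Qed.

Lemma closed_ext (P Q : X -> Prop) :
  (forall x, P x <-> Q x) -> is_closed d P -> is_closed d Q.
Proof.
  intros E HP x nQ. destruct (HP x) as [r [rp H]]; [rewrite E; auto|].
  exists r; split; auto. intros y hy. rewrite <- E. auto.
Qed.

Lemma closed_empty : is_closed d (fun _ => False).
Proof. intros x _. exists 1; split; [lra|]. tauto. Qed.

Lemma closed_union (A B : X -> Prop) : is_closed d A -> is_closed d B ->
  is_closed d (fun x => A x \/ B x).
Proof.
  intros HA HB x hx.
  destruct (HA x) as [r1 [r1p H1]]; [tauto|].
  destruct (HB x) as [r2 [r2p H2]]; [tauto|].
  exists (Rmin r1 r2); split; [apply Rmin_pos; auto|].
  pose proof (Rmin_l r1 r2); pose proof (Rmin_r r1 r2).
  intros y hy [h|h]; [apply (H1 y) | apply (H2 y)]; auto; lra.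
Qed.

Lemma closed_bigcap (F : nat -> X -> Prop) : (forall n, is_closed d (F n)) ->
  is_closed d (fun x => forall n, F n x).
Proof.
  intros HF x hx. apply not_all_ex_not in hx. destruct hx as [n hn].
  destruct (HF n x hn) as [r [rp H]]. exists r; split; auto.
  intros y hy h. apply (H y hy (h n)).
Qed.

Lemma closed_inter (A B : X -> Prop) : is_closed d A -> is_closed d B ->
  is_closed d (fun x => A x /\ B x).
Proof.
  intros HA HB.
  apply (closed_ext (fun x => forall n : nat, if Nat.eqb n 0 then A x else B x)).
  - intros x; split.
    + intros h. exact (conj (h 0%nat) (h 1%nat)).
    + intros [a b] n. destruct (Nat.eqb n 0); auto.
  - apply closed_bigcap. intros n. destruct (Nat.eqb n 0); auto.
Qed.

Lemma closed_guard (P : Prop) (A : X -> Prop) : is_closed d A -> is_closed d (fun x => P /\ A x).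
Proof.
  intros HA. destruct (classic P) as [p|p].
  - apply (closed_ext A); [intros; tauto | auto].
  - apply (closed_ext (fun _ => False)); [intros; tauto | apply closed_empty].
Qed.

Lemma closed_ball c r : is_closed d (fun y => d c y <= r).
Proof.
  intros x hx. exists (d c x - r); split; [lra|].
  intros y hy h. pose proof (d_triangle c y x). rewrite (d_sym y x) in H. lra.
Qed.

Lemma closed_ball_compl c r : is_closed d (fun y => r <= d c y).
Proof.
  intros x hx. exists (r - d c x); split; [lra|].
  intros y hy h. pose proof (d_triangle c x y). lra.
Qed.

Lemma open_preimage (g : X -> X) (U : X -> Prop) : continuous d g -> is_open d U ->
  is_open d (fun y => U (g y)).
Proof.
  intros Hg HU x hx. destruct (HU (g x) hx) as [r [rp H]].
  destruct (Hg x r rp) as [del [dp H2]]. exists del; split; [exact dp|].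
  intros y hy. apply H, H2, hy.
Qed.

Lemma closed_preimage (g : X -> X) (A : X -> Prop) : continuous d g -> is_closed d A ->
  is_closed d (fun y => A (g y)).
Proof. apply open_preimage. Qed.

Lemma continuous_iter (f : X -> X) n : continuous d f -> continuous d (Nat.iter n f).
Proof.
  intros Hf. induction n as [|n IH]; simpl; intros x e he.
  - exists e; split; auto.
  - destruct (Hf (Nat.iter n f x) e he) as [e1 [e1p H1]].
    destruct (IH x e1 e1p) as [e2 [e2p H2]]. exists e2; split; auto.
    intros y hy. apply H1, H2, hy.
Qed.

End Metric.
Section Countable.
Context {X : Type}.

Lemma countable_sub (A B : X -> Prop) :
  (forall x, A x -> B x) -> countable_set B -> countable_set A.
Proof. intros h [g hg]. exists g. intros; apply hg; auto. Qed.

Lemma uncountable_sup (A B : X -> Prop) :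
  (forall x, A x -> B x) -> uncountable_set A -> uncountable_set B.
Proof. intros h hA hB. apply hA. eapply countable_sub; eauto. Qed.

Lemma uncountable_image {Y : Type} (A : X -> Prop) (g : X -> Y) :
  (forall x y, A x -> A y -> g x = g y -> x = y) ->
  uncountable_set A -> uncountable_set (fun w => exists z, A z /\ g z = w).
Proof.
  intros hi hA [G hG]. apply hA. exists (fun x => G (g x)).
  intros x y ax ay e. apply hi; auto. apply hG; eauto.
Qed.

Lemma countable_subsingleton (A : X -> Prop) :
  (forall x y, A x -> A y -> x = y) -> countable_set A.
Proof. intros h. exists (fun _ => 0%nat). intros; auto. Qed.

Lemma uncountable_two_points (A : X -> Prop) :
  uncountable_set A -> exists x y, A x /\ A y /\ x <> y.
Proof.
  intros h. apply NNPP; intro hn. apply h, countable_subsingleton. intros x y ax ay.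
  apply NNPP; intro ne. apply hn; eauto.
Qed.

Lemma uncountable_nonempty (A : X -> Prop) : uncountable_set A -> exists x, A x.
Proof. intros h. destruct (uncountable_two_points A h) as [x [_ [hx _]]]; eauto. Qed.

(* Countable unions of countable sets are countable: code the index of a
   piece containing [x] together with the code of [x] in that piece. *)
Lemma countable_bigcup (F : nat -> X -> Prop) : (forall n, countable_set (F n)) ->
  countable_set (fun x => exists n, F n x).
Proof.
  intros H.
  destruct (choice (fun n g => forall x y, F n x -> F n y -> g x = g y -> x = y) H)
    as [G HG].
  destruct (choice (fun x n => (exists m, F m x) -> F n x)) as [k Hk].
  { intros x. destruct (classic (exists m, F m x)) as [[m hm]|hn].
    - exists m; auto.
    - exists 0%nat; tauto. }
  exists (fun x => to_nat (k x, G (k x) x)). intros x y hx hy e.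
  apply (f_equal of_nat) in e. rewrite !cancel_of_to in e. injection e as e1 e2.
  apply (HG (k x)); auto. rewrite e1; auto. rewrite e2, e1. auto.
Qed.

Lemma countable_union (A B : X -> Prop) : countable_set A -> countable_set B ->
  countable_set (fun x => A x \/ B x).
Proof.
  intros hA hB.
  apply (countable_sub _ (fun x => exists n, (if Nat.eqb n 0 then A else B) x)).
  - intros x [h|h]; [exists 0%nat | exists 1%nat]; auto.
  - apply countable_bigcup. intros n; destruct (Nat.eqb n 0); auto.
Qed.

Lemma countable_list_union {Y : Type} (l : list Y) (F : Y -> X -> Prop) :
  (forall c, In c l -> countable_set (F c)) ->
  countable_set (fun x => exists c, In c l /\ F c x).
Proof.
  induction l as [|a l IH]; intros H.
  - apply countable_subsingleton. intros x y [c [[] _]].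
  - apply (countable_sub _ (fun x => F a x \/ exists c, In c l /\ F c x)).
    + intros x [c [[e|hc] h]]; [subst; left; auto | right; eauto].
    + apply countable_union; [apply H; simpl; auto|].
      apply IH; intros; apply H; simpl; auto.
Qed.

End Countable.

(* Cantor's diagonal argument: there is no injection of [nat -> bool] into [nat]. *)
Lemma bool_sequences_uncountable : ~ exists G : (nat -> bool) -> nat,
  forall a b, G a = G b -> forall n, a n = b n.
Proof.
  intros [G HG].
  destruct (choice (fun n (b : nat -> bool) => (exists a, G a = n) -> G b = n)) as [B HB].
  { intros n. destruct (classic (exists a, G a = n)) as [[a ha]|hn].
    - exists a; auto.
    - exists (fun _ => true); tauto. }
  set (a := fun n => negb (B n n)).
  assert (h : G (B (G a)) = G a) by (apply HB; eauto).
  specialize (HG _ _ h (G a)).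
  assert (flip : B (G a) (G a) = negb (B (G a) (G a))) by exact HG.
  destruct (B (G a) (G a)); discriminate.
Qed.

Section Compact.
Context {X : Type} (d : X -> X -> R) (Hd : is_metric d)
  (Hcpt : is_compact d (fun _ => True)).

Lemma finite_ball_cover rho : 0 < rho ->
  exists l : list X, forall x, exists c, In c l /\ d c x < rho.
Proof.
  intros hr. destruct (Hcpt X (fun c y => d c y < rho)) as [l Hl].
  - intros c; apply open_ball; auto.
  - intros x _. exists x. rewrite d_refl; auto.
  - exists l. intros x. destruct (Hl x I) as [c [h1 h2]]; eauto.
Qed.

Lemma dist_bounded p : exists M, forall y, d p y <= M.
Proof.
  destruct (Hcpt nat (fun n y => d p y < INR n)) as [l Hl].
  - intros n. apply open_ball; auto.
  - intros y _. destruct (INR_unbounded (d p y)) as [n hn]. exists n; lra.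
  - exists (INR (list_max l)). intros y. destruct (Hl y I) as [n [hn h]].
    pose proof (le_INR _ _ (le_list_max n l hn)). lra.
Qed.

Lemma closed_compact K : is_closed d K -> is_compact d K.
Proof.
  intros HK Idx G HG Hcov.
  destruct (Hcpt (option Idx) (fun o x => match o with Some i => G i x | None => ~ K x end))
    as [l Hl].
  - intros [i|]; auto.
  - intros x _. destruct (classic (K x)) as [k|k].
    + destruct (Hcov x k) as [i hi]. exists (Some i); auto.
    + exists None; auto.
  - exists (concat (map (fun o => match o with Some i => i :: nil | None => nil end) l)).
    intros x kx. destruct (Hl x I) as [[i|] [h1 h2]]; [|tauto].
    exists i; split; auto. apply in_concat. exists (i :: nil); split; [|left; auto].
    apply in_map_iff. exists (Some i); auto.
Qed.

(* Compact sets are closed: the complements of the closed balls around [z]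
   cover [K], and a finite subcover leaves a ball around [z] free of [K]. *)
Lemma compact_closed K : is_compact d K -> is_closed d K.
Proof.
  intros HK z hz.
  destruct (HK nat (fun n w => / (INR n + 1) < d z w)) as [l Hl].
  - intros n w hw. exists (d z w - / (INR n + 1)); split; [lra|].
    intros y hy. pose proof (d_triangle d Hd z y w). rewrite (d_sym d Hd y w) in H. lra.
  - intros w kw. apply inv_succ_small, (d_pos d Hd). intro e; subst; tauto.
  - exists (/ (INR (list_max l) + 1)); split; [apply inv_succ_pos|].
    intros y hy ky. destruct (Hl y ky) as [n [hn h]].
    pose proof (inv_succ_anti _ _ (le_list_max n l hn)). lra.
Qed.

Lemma image_compact K (g : X -> X) : continuous d g -> is_compact d K ->
  is_compact d (fun w => exists z, K z /\ g z = w).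
Proof.
  intros Hg HK Idx G HG Hcov.
  destruct (HK Idx (fun i z => G i (g z))) as [l Hl].
  - intros i. apply open_preimage; auto.
  - intros z kz. apply Hcov. eauto.
  - exists l. intros w [z [kz e]]. subst. apply Hl; auto.
Qed.

Lemma nested_intersection (F : nat -> X -> Prop) :
  (forall n, is_closed d (F n)) -> (forall n, exists z, F n z) ->
  (forall n z, F (S n) z -> F n z) -> exists z, forall n, F n z.
Proof.
  intros HF Hne Hmon. apply NNPP. intros Hn.
  assert (mono : forall n m z, (n <= m)%nat -> F m z -> F n z).
  { intros n m z h. induction h; auto. }
  destruct (Hcpt nat (fun n z => ~ F n z)) as [l Hl].
  - intros n; apply HF.
  - intros z _. apply NNPP; intro h. apply Hn. exists z. intro n.
    apply NNPP; intro h2. apply h; eauto.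
  - destruct (Hne (list_max l)) as [z hz].
    destruct (Hl z I) as [i [hi h]]. apply h. eapply mono; [|exact hz].
    apply le_list_max; auto.
Qed.

(* A countable dense sequence, from finite covers by balls of radius 1/(m+1). *)
Lemma dense_sequence (x0 : X) :
  exists e : nat -> X, forall x eps, 0 < eps -> exists j, d (e j) x < eps.
Proof.
  destruct (choice (fun (m : nat) l => forall x, exists c, In c l /\ d c x < / (INR m + 1)))
    as [L HL].
  { intros m. apply finite_ball_cover, inv_succ_pos. }
  exists (fun k => nth (snd (of_nat k)) (L (fst (of_nat k))) x0).
  intros x eps he. destruct (inv_succ_small eps he) as [m hm].
  destruct (HL m x) as [c [hc hdc]]. destruct (In_nth (L m) c x0 hc) as [j [_ hj]].
  exists (to_nat (m, j)). rewrite cancel_of_to. simpl. rewrite hj. lra.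
Qed.

Lemma closed_ball_basis (x0 : X) : exists (c : nat -> X) (r : nat -> R), (forall k, 0 < r k) /\
  forall U, is_open d U -> nonempty U -> exists k, forall y, d (c k) y <= r k -> U y.
Proof.
  destruct (dense_sequence x0) as [e He].
  exists (fun k => e (fst (of_nat k))), (fun k => / (INR (snd (of_nat k)) + 1)).
  split; [intros; apply inv_succ_pos|].
  intros U HU [x ux]. destruct (HU x ux) as [rho [hr Hr]].
  destruct (inv_succ_small (rho / 2)) as [m hm]; [lra|].
  destruct (He x (/ (INR m + 1))) as [j hj]; [apply inv_succ_pos|].
  exists (to_nat (j, m)). rewrite cancel_of_to. simpl. intros y hy.
  apply Hr. pose proof (d_triangle_center d Hd (e j) x y). lra.
Qed.

End Compact.

Section Splitting.
Context {X : Type} (d : X -> X -> R) (Hd : is_metric d)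
  (Hcpt : is_compact d (fun _ => True)).

Definition inner_part (W : X -> Prop) p t := fun x => W x /\ d p x <= t.
Definition outer_part (W : X -> Prop) p t := fun x => W x /\ t <= d p x.

Definition splits_at (W : X -> Prop) p :=
  exists t1 t2, t1 < t2 /\ uncountable_set (inner_part W p t1) /\
                          uncountable_set (outer_part W p t2).

(* The critical radius: the supremum of the radii [t] for which only countably
   many points of [W] lie within distance [t] of [p]. *)
Lemma critical_radius W p : uncountable_set W -> exists m,
  (forall t, t < m -> countable_set (inner_part W p t)) /\
  (forall t, m < t -> uncountable_set (inner_part W p t)).
Proof.
  intros uW. set (E := fun t => countable_set (inner_part W p t)).
  assert (Edown : forall t t', t <= t' -> E t' -> E t).
  { intros t t' h. apply countable_sub. intros x [a b]; split; auto; lra. }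
  destruct (dist_bounded d Hd Hcpt p) as [M HM].
  assert (bE : bound E).
  { exists M. intros t ht. destruct (Rle_dec t M) as [h|h]; auto. exfalso. apply uW.
    eapply countable_sub; [|exact ht]. intros x wx; split; auto. specialize (HM x); lra. }
  assert (neE : exists t, E t).
  { exists (-1). apply countable_subsingleton. intros x y [_ h].
    pose proof (d_nonneg d Hd p x); lra. }
  destruct (completeness E bE neE) as [m [mub mlub]].
  exists m. split.
  - intros t ht. apply NNPP; intro hn.
    assert (is_upper_bound E t).
    { intros t' h'. destruct (Rle_dec t' t) as [a|a]; auto. exfalso; apply hn.
      apply (Edown t t'); auto; lra. }
    specialize (mlub t H); lra.
  - intros t ht h. specialize (mub t h). lra.
Qed.

(* If [W] is not split at [p], all but countably many points of [W] lie on a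
   single sphere centred at [p], namely the one of critical radius. *)
Lemma unsplit_sphere W p : ~ splits_at W p ->
  exists m, countable_set (fun x => W x /\ d p x <> m).
Proof.
  intros Hns. destruct (classic (countable_set W)) as [cW|uW].
  { exists 0. eapply countable_sub; [|exact cW]. intros x [a _]; auto. }
  destruct (critical_radius W p uW) as [m [below above]].
  exists m.
  apply (countable_sub _ (fun x => (exists n, inner_part W p (m - / (INR n + 1)) x) \/
                                   (exists n, outer_part W p (m + / (INR n + 1)) x))).
  - intros x [wx hx]. destruct (Rlt_dec (d p x) m) as [a|a].
    + left. destruct (inv_succ_small (m - d p x)) as [n hn]; [lra|].
      exists n; split; auto; lra.
    + right. destruct (inv_succ_small (d p x - m)) as [n hn]; [lra|].
      exists n; split; auto; lra.
  - pose proof inv_succ_pos.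
    apply countable_union; apply countable_bigcup; intros n.
    + apply below. specialize (H n); lra.
    + apply NNPP; intro hc. apply Hns.
      exists (m + / (INR n + 1) / 2), (m + / (INR n + 1)). specialize (H n).
      split; [lra|]. split; auto. apply above; lra.
Qed.

(* Every uncountable set is split at some point: otherwise it would lie, up to
   countably many points, on spheres around all points of a dense sequence,
   and two points on all these spheres coincide. *)
Lemma uncountable_splits W : uncountable_set W -> exists p, splits_at W p.
Proof.
  intros uW. apply NNPP; intro hn.
  destruct (uncountable_nonempty W uW) as [x0 _].
  destruct (dense_sequence d Hd Hcpt x0) as [e He].
  destruct (choice (fun j m => countable_set (fun x => W x /\ d (e j) x <> m))) as [m Hm].
  { intros j. apply unsplit_sphere. intro h. apply hn; eauto. }
  apply uW. apply (countable_sub _ (fun x => (exists j, W x /\ d (e j) x <> m j) \/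
                                         (W x /\ forall j, d (e j) x = m j))).
  - intros x wx. destruct (classic (exists j, d (e j) x <> m j)) as [[j hj]|hj].
    + left; exists j; auto.
    + right; split; auto. intros j. apply NNPP; intro; apply hj; eauto.
  - apply countable_union; [apply countable_bigcup; auto|].
    apply countable_subsingleton. intros x y [_ hx] [_ hy].
    apply NNPP; intro ne. pose proof (d_pos d Hd x y ne) as hpos.
    destruct (He x (d x y / 2)) as [j hj]; [lra|].
    pose proof (d_triangle_center d Hd (e j) x y).
    rewrite (hx j), (hy j) in *. lra.
Qed.

End Splitting.

Section Peeling.
Context {X : Type} (d : X -> X -> R) (Hd : is_metric d).
Variables (center : (X -> Prop) -> X) (r_in r_out : (X -> Prop) -> R).
Hypothesis Hsplit : forall W, uncountable_set W -> r_in W < r_out W /\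
  uncountable_set (inner_part d W (center W) (r_in W)) /\
  uncountable_set (outer_part d W (center W) (r_out W)).
Variable W : X -> Prop.
Hypothesis W_unc : uncountable_set W.

Fixpoint rest n : X -> Prop :=
  match n with
  | O => W
  | S n => outer_part d (rest n) (center (rest n)) (r_out (rest n))
  end.

Definition piece n := inner_part d (rest n) (center (rest n)) (r_in (rest n)).

Lemma rest_uncountable n : uncountable_set (rest n).
Proof. induction n as [|n IH]; [exact W_unc | apply Hsplit, IH]. Qed.

Lemma rest_decreasing n m x : (n <= m)%nat -> rest m x -> rest n x.
Proof. intros h. induction h as [|m h IH]; auto. intros [hx _]. auto. Qed.

Lemma piece_uncountable n : uncountable_set (piece n).
Proof. apply Hsplit, rest_uncountable. Qed.

Lemma piece_sub n x : piece n x -> W x.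
Proof. intros [h _]. apply (rest_decreasing 0 n); [lia | exact h]. Qed.

(* A later rest lies beyond the outer radius, hence misses every earlier piece. *)
Lemma piece_disjoint k j x : piece k x -> piece j x -> k = j.
Proof.
  assert (key : forall a b, (a < b)%nat -> piece a x -> rest b x -> False).
  { intros a b hab [_ ha] hb. apply (rest_decreasing (S a) b) in hb; [|lia].
    destruct hb as [_ hb]. destruct (Hsplit _ (rest_uncountable a)) as [hlt _]. lra. }
  intros hk hj. destruct (Nat.lt_trichotomy k j) as [a|[a|a]]; auto; exfalso.
  - exact (key k j a hk (proj1 hj)).
  - exact (key j k a hj (proj1 hk)).
Qed.

Lemma piece_closed n : is_closed d W -> is_closed d (piece n).
Proof.
  intros Wc. assert (Rc : forall m, is_closed d (rest m)).
  { intros m. induction m as [|m IH]; auto.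
    apply closed_inter; auto. apply closed_ball_compl; auto. }
  apply closed_inter; auto. apply closed_ball; auto.
Qed.

End Peeling.

Lemma uncountable_partition {X : Type} (d : X -> X -> R) (Hd : is_metric d)
  (Hcpt : is_compact d (fun _ => True)) (W : X -> Prop) : uncountable_set W ->
  exists A : nat -> X -> Prop, (forall k, uncountable_set (A k)) /\
    (forall k x, A k x -> W x) /\ (forall k j x, A k x -> A j x -> k = j) /\
    (is_closed d W -> forall k, is_closed d (A k)).
Proof.
  intros uW. destruct (uncountable_nonempty W uW) as [x0 _].
  destruct (choice (fun V (q : X * R * R) => uncountable_set V ->
     snd (fst q) < snd q /\ uncountable_set (inner_part d V (fst (fst q)) (snd (fst q))) /\
                            uncountable_set (outer_part d V (fst (fst q)) (snd q)))) as [P HP].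
  { intros V. destruct (classic (uncountable_set V)) as [u|u].
    - destruct (uncountable_splits d Hd Hcpt V u) as [p [t1 [t2 h]]]. exists (p, t1, t2); auto.
    - exists (x0, 0, 0); tauto. }
  set (center := fun V => fst (fst (P V))).
  set (r_in := fun V => snd (fst (P V))). set (r_out := fun V => snd (P V)).
  exists (piece d center r_in r_out W). split; [|split; [|split]].
  - apply piece_uncountable; auto.
  - apply piece_sub.
  - apply piece_disjoint; auto.
  - intros Wc k. apply piece_closed; auto.
Qed.

(* [pre a n] is the word [a (n-1) :: ... :: a 0]: the first [n] letters of the
   branch [a], most recent letter first. *)
Fixpoint pre (a : nat -> bool) (n : nat) : list bool :=
  match n with O => nil | S n => a n :: pre a n end.

Lemma pre_length a n : length (pre a n) = n.
Proof. induction n; simpl; auto. Qed.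

Section CantorScheme.
Context {X : Type} (d : X -> X -> R) (Hd : is_metric d)
  (Hcpt : is_compact d (fun _ => True)) (g : X -> X).

Record cantor_scheme (N : list bool -> X -> Prop) : Prop := {
  scheme_closed : forall s, is_closed d (N s);
  scheme_nonempty : forall s, exists z, N s z;
  scheme_nested : forall b s z, N (b :: s) z -> N s z;
  scheme_separated : forall s z z', N (false :: s) z -> N (true :: s) z' -> g z <> g z';
  scheme_small : forall b s, exists c, forall z, N (b :: s) z -> d c z <= / (INR (length s) + 1)
}.

Variable N : list bool -> X -> Prop.
Hypothesis HN : cantor_scheme N.

Definition scheme_limit z := forall n, exists s, length s = n /\ N s z.

Lemma scheme_level_separated s : forall t z z',
  length s = length t -> s <> t -> N s z -> N t z' -> g z <> g z'.
Proof.
  induction s as [|a s IH]; intros [|b t] z z' hl hne hz hz'; simpl in hl;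
    try discriminate; [tauto|].
  destruct (classic (s = t)) as [e|e].
  - subst. destruct a, b; try tauto.
    + intro h. apply (scheme_separated N HN t z' z hz' hz). auto.
    + apply (scheme_separated N HN t z z' hz hz').
  - apply (IH t z z'); auto; eapply (scheme_nested N HN); eauto.
Qed.

Lemma scheme_level_unique u s z : length u = length s -> N u z -> N s z -> u = s.
Proof.
  intros hl hu hs. apply NNPP; intro ne. exact (scheme_level_separated u s z z hl ne hu hs eq_refl).
Qed.

Lemma level_closed n : forall F : list bool -> X -> Prop, (forall u, is_closed d (F u)) ->
  is_closed d (fun z => exists u, length u = n /\ F u z).
Proof.
  induction n as [|n IH]; intros F HF.
  - apply (closed_ext d (F nil)); auto. intros z; split.
    + intros h; exists nil; auto.
    + intros [[|b u] [hl h]]; simpl in hl; try discriminate; auto.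
  - apply (closed_ext d (fun z => exists u, length u = n /\ (F (false :: u) z \/ F (true :: u) z))).
    + intros z; split.
      * intros [u [hl [h|h]]]; eexists; split; [|exact h| |exact h]; simpl; auto.
      * intros [[|b u] [hl h]]; simpl in hl; try discriminate.
        exists u; split; [lia|]. destruct b; auto.
    + apply IH. intros u; apply closed_union; auto.
Qed.

Lemma scheme_limit_closed : is_closed d scheme_limit.
Proof. apply closed_bigcap. intros n. apply level_closed, (scheme_closed N HN). Qed.

Lemma scheme_shallower s : forall z n, N s z -> (n <= length s)%nat ->
  exists u, length u = n /\ N u z.
Proof.
  induction s as [|a s IH]; intros z n hz hn; simpl in hn.
  - exists nil; split; auto; simpl; lia.
  - destruct (Nat.eq_dec n (S (length s))) as [e|e].
    + exists (a :: s); simpl; auto.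
    + apply (IH z n); [eapply (scheme_nested N HN); eauto | lia].
Qed.

Lemma scheme_branch a s : exists z, scheme_limit z /\ forall n, N (pre a n ++ s) z.
Proof.
  destruct (nested_intersection d Hcpt (fun n => N (pre a n ++ s))) as [z hz].
  - intros; apply (scheme_closed N HN).
  - intros; apply (scheme_nonempty N HN).
  - intros n z h. exact (scheme_nested N HN (a n) _ z h).
  - exists z; split; auto. intros n. apply (scheme_shallower (pre a n ++ s)); auto.
    rewrite length_app, pre_length; lia.
Qed.

Lemma scheme_limit_separate z z' : scheme_limit z -> scheme_limit z' -> z <> z' ->
  exists s t, length s = length t /\ s <> t /\ N s z /\ N t z'.
Proof.
  intros hz hz' ne. pose proof (d_pos d Hd _ _ ne) as hp.
  destruct (inv_succ_small (d z z' / 2)) as [n hn]; [lra|].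
  destruct (hz (S n)) as [s [hs Ns]]. destruct (hz' (S n)) as [t [ht Nt]].
  exists s, t. split; [lia|]. split; auto. intro e; subst t.
  destruct s as [|b s0]; simpl in hs; [discriminate|]. injection hs as hs.
  destruct (scheme_small N HN b s0) as [c hc].
  pose proof (d_triangle_center d Hd c z z'). pose proof (hc z Ns). pose proof (hc z' Nt).
  rewrite hs in *. lra.
Qed.

Lemma scheme_limit_injective z z' : scheme_limit z -> scheme_limit z' -> g z = g z' -> z = z'.
Proof.
  intros hz hz' e. apply NNPP; intro ne.
  destruct (scheme_limit_separate z z' hz hz' ne) as [s [t [hl [hst [Ns Nt]]]]].
  exact (scheme_level_separated s t z z' hl hst Ns Nt e).
Qed.

Lemma scheme_limit_perfect z r : scheme_limit z -> 0 < r ->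
  exists y, scheme_limit y /\ y <> z /\ d z y < r.
Proof.
  intros hz hr. destruct (inv_succ_small (r / 2)) as [n hn]; [lra|].
  destruct (hz (S n)) as [s [hs Ns]].
  destruct s as [|b0 s0]; simpl in hs; [discriminate|]. injection hs as hs.
  destruct (scheme_small N HN b0 s0) as [c hc]. rewrite hs in hc.
  assert (near : forall y, N (b0 :: s0) y -> d z y < r).
  { intros y hy. pose proof (d_triangle_center d Hd c z y).
    pose proof (hc z Ns). pose proof (hc y hy). lra. }
  destruct (scheme_branch (fun _ => false) (false :: b0 :: s0)) as [y0 [C0 N0]].
  destruct (scheme_branch (fun _ => false) (true :: b0 :: s0)) as [y1 [C1 N1]].
  specialize (N0 0%nat); specialize (N1 0%nat); simpl in N0, N1.
  pose proof (scheme_separated N HN _ _ _ N0 N1) as hg.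
  destruct (classic (y0 = z)) as [e|e].
  - exists y1. split; [|split]; auto.
    + intro e2; subst. apply hg; auto.
    + apply near; eapply (scheme_nested N HN); eauto.
  - exists y0. split; [|split]; auto. apply near; eapply (scheme_nested N HN); eauto.
Qed.

(* Two limit points in different nodes of one depth are cut apart by the
   clopen partition of the limit set given by that depth. *)
Lemma scheme_limit_totally_disconnected : totally_disconnected d scheme_limit.
Proof.
  intros A HA Acon x y ax ay. apply NNPP; intro ne.
  destruct (scheme_limit_separate x y (HA x ax) (HA y ay) ne) as [s [t [hl [hst [Ns Nt]]]]].
  set (Other := fun w => exists u, length u = length s /\ u <> s /\ N u w).
  assert (Oc : is_closed d Other)
    by (apply level_closed; intros u; apply closed_guard, (scheme_closed N HN)).
  assert (level : forall a, A a -> exists u, length u = length s /\ N u a)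
    by (intros a aa; apply (HA a aa)).
  apply Acon. exists (fun w => ~ Other w), (fun w => ~ N s w).
  split; [exact Oc|]. split; [apply (scheme_closed N HN)|].
  split; [exists x; split; auto; intros [u [hu [hne hN]]];
          apply hne; eapply scheme_level_unique; eauto|].
  split; [exists y; split; auto; intro h; apply hst; symmetry;
          eapply scheme_level_unique; eauto; lia|].
  split; intros a aa; destruct (level a aa) as [w [hw Nw]];
    destruct (classic (w = s)) as [e|e]; subst.
  - left. intros [u [hu [hne hN]]]. apply hne; eapply scheme_level_unique; eauto.
  - right. intro h. apply e. eapply scheme_level_unique; eauto.
  - tauto.
  - intros hU _. apply hU. exists w; auto.
Qed.

(* The branches [a : nat -> bool] give limit points with pairwise distinct
   [g]-images, so the limit set is uncountable. *)
Lemma scheme_limit_uncountable : uncountable_set scheme_limit.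
Proof.
  intros [G HG].
  destruct (choice (fun a z => scheme_limit z /\ forall n, N (pre a n) z)) as [phi Hphi].
  { intros a. destruct (scheme_branch a nil) as [z [hz h]]. exists z; split; auto.
    intros n; specialize (h n); rewrite app_nil_r in h; auto. }
  apply bool_sequences_uncountable. exists (fun a => G (phi a)). intros a b e n.
  assert (e2 : phi a = phi b) by (apply HG; auto; apply Hphi).
  apply NNPP; intro hn.
  apply (scheme_level_separated (pre a (S n)) (pre b (S n)) (phi a) (phi b)).
  - rewrite !pre_length; auto.
  - simpl. intro h; injection h; auto.
  - apply Hphi.
  - apply Hphi.
  - rewrite e2; auto.
Qed.

Lemma scheme_limit_cantor : cantor_set d scheme_limit.
Proof.
  split; [|split; [|split]].
  - destruct (scheme_branch (fun _ => false) nil) as [z [hz _]]; exists z; auto.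
  - apply (closed_compact d Hcpt), scheme_limit_closed.
  - split; [apply scheme_limit_closed|]. intros x hx r hr.
    destruct (scheme_limit_perfect x r hx hr) as [y [hy [ne h]]]. exists y; auto.
  - apply scheme_limit_totally_disconnected.
Qed.

Lemma scheme_limit_root z : scheme_limit z -> N nil z.
Proof.
  intros h. destruct (h 0%nat) as [[|b u] [hl hu]]; simpl in hl; try discriminate; auto.
Qed.

End CantorScheme.

Section CantorInside.
Context {X : Type} (d : X -> X -> R) (Hd : is_metric d)
  (Hcpt : is_compact d (fun _ => True)) (g : X -> X) (Hg : continuous d g).

Definition img (K : X -> Prop) := fun w => exists z, K z /\ g z = w.

Lemma uncountable_image_ball rho K : 0 < rho -> uncountable_set (img K) ->
  exists c, uncountable_set (img (fun z => K z /\ d c z <= rho)).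
Proof.
  intros hr hK. destruct (finite_ball_cover d Hd Hcpt rho hr) as [l Hl].
  apply NNPP; intro hn. apply hK.
  apply (countable_sub _ (fun w => exists c, In c l /\ img (fun z => K z /\ d c z <= rho) w)).
  - intros w [z [kz e]]. destruct (Hl z) as [c [hc hdc]]. exists c; split; auto.
    exists z; split; auto. split; auto; lra.
  - apply countable_list_union. intros c _. apply NNPP; intro h. apply hn; eauto.
Qed.

(* The sets on which a Cantor scheme for [g] is built. *)
Definition admissible K := is_closed d K /\ uncountable_set (img K).

(* Refinement step: an admissible set contains two admissible subsets of
   radius [1/(n+1)] whose [g]-images are disjoint, taken from the two sides of
   a split of its image. *)
Lemma admissible_refine n K : admissible K ->
  exists K1 K2, admissible K1 /\ admissible K2 /\
    (forall z, K1 z -> K z) /\ (forall z, K2 z -> K z) /\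
    (forall z z', K1 z -> K2 z' -> g z <> g z') /\
    (exists c, forall z, K1 z -> d c z <= / (INR n + 1)) /\
    (exists c, forall z, K2 z -> d c z <= / (INR n + 1)).
Proof.
  intros [Kc Ku].
  destruct (uncountable_splits d Hd Hcpt (img K) Ku) as [p [t1 [t2 [ht [u1 u2]]]]].
  set (P1 := fun z => K z /\ d p (g z) <= t1).
  set (P2 := fun z => K z /\ t2 <= d p (g z)).
  assert (i1 : uncountable_set (img P1)).
  { eapply uncountable_sup; [|exact u1]. intros w [[z [kz e]] h]. subst.
    exists z; repeat split; auto. }
  assert (i2 : uncountable_set (img P2)).
  { eapply uncountable_sup; [|exact u2]. intros w [[z [kz e]] h]. subst.
    exists z; repeat split; auto. }
  pose proof (inv_succ_pos n) as hp.
  destruct (uncountable_image_ball _ _ hp i1) as [c1 h1].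
  destruct (uncountable_image_ball _ _ hp i2) as [c2 h2].
  exists (fun z => P1 z /\ d c1 z <= / (INR n + 1)),
         (fun z => P2 z /\ d c2 z <= / (INR n + 1)).
  unfold admissible, P1, P2.
  repeat split; auto.
  - repeat apply closed_inter; auto.
    + apply (closed_preimage d g (fun w => d p w <= t1)); auto. apply closed_ball; auto.
    + apply closed_ball; auto.
  - repeat apply closed_inter; auto.
    + apply (closed_preimage d g (fun w => t2 <= d p w)); auto. apply closed_ball_compl; auto.
    + apply closed_ball; auto.
  - intros z h; apply h.
  - intros z h; apply h.
  - intros z z' [[_ a] _] [[_ b] _] e. rewrite e in a. lra.
  - exists c1; intros z h; apply h.
  - exists c2; intros z h; apply h.
Qed.

Lemma cantor_scheme_inside K0 : admissible K0 ->
  exists N, cantor_scheme d g N /\ N nil = K0.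
Proof.
  intros K0a. set (GK := {K : X -> Prop | admissible K}).
  destruct (choice (fun (p : nat * GK) (q : GK * GK) =>
    let K := proj1_sig (snd p) in let K1 := proj1_sig (fst q) in
    let K2 := proj1_sig (snd q) in
    (forall z, K1 z -> K z) /\ (forall z, K2 z -> K z) /\
    (forall z z', K1 z -> K2 z' -> g z <> g z') /\
    (exists c, forall z, K1 z -> d c z <= / (INR (fst p) + 1)) /\
    (exists c, forall z, K2 z -> d c z <= / (INR (fst p) + 1)))) as [F HF].
  { intros [n [K Ka]]. simpl.
    destruct (admissible_refine n K Ka) as [K1 [K2 [a1 [a2 h]]]].
    exists (exist _ K1 a1, exist _ K2 a2). exact h. }
  set (node := fix node (s : list bool) : GK :=
    match s with
    | nil => exist _ K0 K0a
    | b :: s' => (if b then snd else fst) (F (length s', node s'))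
    end).
  exists (fun s => proj1_sig (node s)). split; [|reflexivity].
  assert (Na : forall s, admissible (proj1_sig (node s))) by (intros s; exact (proj2_sig (node s))).
  split.
  - intros s. apply Na.
  - intros s. destruct (Na s) as [_ u].
    destruct (uncountable_nonempty _ u) as [w [z [hz _]]]; eauto.
  - intros b s z. destruct (HF (length s, node s)) as [a1 [a2 _]].
    destruct b; [exact (a2 z)|exact (a1 z)].
  - intros s z z'. destruct (HF (length s, node s)) as [_ [_ [a _]]]. exact (a z z').
  - intros b s. destruct (HF (length s, node s)) as [_ [_ [_ [a1 a2]]]].
    destruct b; [exact a2|exact a1].
Qed.

Lemma cantor_set_inside K0 : admissible K0 ->
  exists C, cantor_set d C /\ uncountable_set C /\ (forall z, C z -> K0 z) /\
    (forall z z', C z -> C z' -> g z = g z' -> z = z').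
Proof.
  intros K0a. destruct (cantor_scheme_inside K0 K0a) as [N [HN root]].
  exists (scheme_limit N). split; [|split; [|split]].
  - exact (scheme_limit_cantor d Hd Hcpt g N HN).
  - apply (scheme_limit_uncountable d Hcpt g); auto.
  - intros z hz. rewrite <- root. apply scheme_limit_root, hz.
  - apply (scheme_limit_injective d Hd g); auto.
Qed.

End CantorInside.

Section CDense.
Context {X : Type} (d : X -> X -> R).

Lemma c_dense_union (T : nat -> X -> Prop) : (forall k, uncountable_set (T k)) ->
  (forall U, is_open d U -> nonempty U -> exists k, forall y, T k y -> U y) ->
  c_dense d (fun y => exists k, T k y).
Proof.
  intros Tu HT U HU hne. destruct (HT U HU hne) as [k hk].
  apply (uncountable_sup (T k)); [|apply Tu]. intros y hy. split; eauto.
Qed.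

Lemma c_dense_dense (T : X -> Prop) : c_dense d T -> dense d T.
Proof.
  intros HT U HU hne. destruct (uncountable_nonempty _ (HT U HU hne)) as [y [ty uy]]. eauto.
Qed.

End CDense.

Section Shadowing.
Context {X : Type} (d : X -> X -> R) (Hd : is_metric d) (f : X -> X).

Lemma orbit_dist_shadow x x' y y' N :
  Nat.iter N f y = Nat.iter N f x -> Nat.iter N f y' = Nat.iter N f x' ->
  forall n, (N <= n)%nat -> orbit_dist d f y y' n = orbit_dist d f x x' n.
Proof.
  intros hy hy' n hn. unfold orbit_dist.
  replace n with ((n - N) + N)%nat by lia. rewrite !Nat.iter_add, hy, hy'. auto.
Qed.

(* The three orbit properties in question only depend on the tail of the orbit
   distances, so they pass from [(x, x')] to any pair [(y, y')] with the same
   iterates from some time [N] on. *)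
Section PairShadow.
Variables (x x' y y' : X) (N : nat).
Hypotheses (Hy : Nat.iter N f y = Nat.iter N f x) (Hy' : Nat.iter N f y' = Nat.iter N f x').

Lemma synd_proximal_shadow : synd_proximal d f x x' -> synd_proximal d f y y'.
Proof.
  intros sp eta he B hB.
  destruct (sp eta he (fun n => (N <= n)%nat /\ B n)) as [n [h1 [h2 h3]]].
  - intros L. destruct (hB (L + N)%nat) as [m hm]. exists (m + N)%nat.
    intros i hi. split; [lia|]. replace (m + N + i)%nat with (m + (N + i))%nat by lia.
    apply hm; lia.
  - exists n. rewrite (orbit_dist_shadow x x' y y' N Hy Hy'); auto.
Qed.

Lemma asymptotic_shadow : asymptotic d f y y' -> asymptotic d f x x'.
Proof.
  intros ha eps he. destruct (ha eps he) as [N0 hN0].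
  exists (max N0 N). intros n hn.
  rewrite <- (orbit_dist_shadow x x' y y' N Hy Hy') by lia. apply hN0. lia.
Qed.

Lemma limsup_shadow eps :
  limsup_ge (orbit_dist d f x x') eps -> limsup_ge (orbit_dist d f y y') eps.
Proof.
  intros He delta hd N0. destruct (He delta hd (max N0 N)) as [n [hn h]].
  exists n. split; [lia|]. rewrite (orbit_dist_shadow x x' y y' N Hy Hy'); auto. lia.
Qed.

End PairShadow.

(* Eventually equal orbits are asymptotic, so every iterate of [f] is
   injective on a syndetically scrambled set. *)
Lemma eventually_equal_asymptotic x x' n :
  Nat.iter n f x = Nat.iter n f x' -> asymptotic d f x x'.
Proof.
  intros h eps he. exists n. intros m hm. unfold orbit_dist.
  replace m with ((m - n) + n)%nat by lia. rewrite !Nat.iter_add, h, (d_refl d Hd).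
  unfold Rdist. rewrite Rminus_0_r, Rabs_R0. lra.
Qed.

Lemma scrambled_iter_injective S n x x' : synd_scrambled d f S -> S x -> S x' ->
  Nat.iter n f x = Nat.iter n f x' -> x = x'.
Proof.
  intros [_ H] hx hx' e. apply NNPP; intro ne. destruct (H x x' hx hx' ne) as [_ na].
  apply na. eapply eventually_equal_asymptotic; eauto.
Qed.

Definition shadows (S T : X -> Prop) := forall y y', T y -> T y' -> y <> y' ->
  exists x x' N, S x /\ S x' /\ x <> x' /\
    Nat.iter N f y = Nat.iter N f x /\ Nat.iter N f y' = Nat.iter N f x'.

Lemma shadow_scrambled S T : synd_scrambled d f S ->
  (exists y y', T y /\ T y' /\ y <> y') -> shadows S T -> synd_scrambled d f T.
Proof.
  intros [_ HS] two Hsh. split; auto. intros y y' hy hy' ne.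
  destruct (Hsh y y' hy hy' ne) as [x [x' [N [sx [sx' [nx [e e']]]]]]].
  destruct (HS x x' sx sx' nx) as [sp na]. split.
  - exact (synd_proximal_shadow x x' y y' N e e' sp).
  - intros ha. exact (na (asymptotic_shadow x x' y y' N e e' ha)).
Qed.

Lemma shadow_eps_scrambled S T eps : synd_eps_scrambled d f S eps ->
  (exists y y', T y /\ T y' /\ y <> y') -> shadows S T -> synd_eps_scrambled d f T eps.
Proof.
  intros [HS He] two Hsh. split; [exact (shadow_scrambled S T HS two Hsh)|].
  intros y y' hy hy' ne.
  destruct (Hsh y y' hy hy' ne) as [x [x' [N [sx [sx' [nx [e e']]]]]]].
  exact (limsup_shadow x x' y y' N e e' eps (He x x' sx sx' nx)).
Qed.

Definition iterate_copy (A : X -> Prop) (n : nat) (Tk : X -> Prop) :=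
  (forall y, Tk y -> exists x, A x /\ Nat.iter n f y = Nat.iter n f x) /\
  (forall y y', Tk y -> Tk y' -> Nat.iter n f y = Nat.iter n f y' -> y = y').

Definition copy_inside (A : X -> Prop) (n : nat) (B Tk : X -> Prop) :=
  iterate_copy A n Tk /\ uncountable_set Tk /\ (forall y, Tk y -> B y).

(* A union of iterate copies of pairwise disjoint pieces of [S] shadows [S]:
   distinct points have distinct partners, by disjointness across pieces and by
   injectivity of [f^n] within one copy. *)
Lemma iterate_copies_shadow S (A T : nat -> X -> Prop) (n : nat -> nat) :
  (forall k x, A k x -> S x) -> (forall k j x, A k x -> A j x -> k = j) ->
  (forall k, iterate_copy (A k) (n k) (T k)) -> shadows S (fun y => exists k, T k y).
Proof.
  intros A_sub A_disj HT y y' [k hy] [j hy'] ne.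
  destruct (proj1 (HT k) y hy) as [x [ax ex]].
  destruct (proj1 (HT j) y' hy') as [x' [ax' ex']].
  exists x, x', (n j + n k)%nat. repeat split; eauto.
  - intro e; subst x'. assert (k = j) by eauto. subst j.
    apply ne, (proj2 (HT k)); auto. congruence.
  - rewrite !Nat.iter_add, ex; auto.
  - rewrite Nat.add_comm, !Nat.iter_add, ex'; auto.
Qed.

End Shadowing.

Section Copies.
Context {X : Type} (d : X -> X -> R) (Hd : is_metric d)
  (Hcpt : is_compact d (fun _ => True)) (f : X -> X).
Variables (S A B : X -> Prop) (n : nat).
Hypotheses (HS : synd_scrambled d f S) (A_sub : forall x, A x -> S x)
  (A_unc : uncountable_set A)
  (reach : forall x, A x -> exists u, B u /\ Nat.iter n f u = Nat.iter n f x).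

(* Picking for each point of [A] a point of [B] with the same [n]-th iterate
   gives an uncountable iterate copy of [A] inside [B]. *)
Lemma iterate_copy_in : exists Tk, copy_inside f A n B Tk.
Proof.
  destruct (choice (fun x u => A x -> B u /\ Nat.iter n f u = Nat.iter n f x)) as [u Hu].
  { intros x. destruct (classic (A x)) as [ax|ax].
    - destruct (reach x ax) as [v hv]. exists v; auto.
    - exists x; tauto. }
  assert (u_inj : forall x x', A x -> A x' -> u x = u x' -> x = x').
  { intros x x' ax ax' e. apply (scrambled_iter_injective d Hd f S n); auto.
    rewrite <- (proj2 (Hu x ax)), <- (proj2 (Hu x' ax')), e. reflexivity. }
  exists (fun y => exists x, A x /\ u x = y). split; [split|split].
  - intros y [x [ax <-]]. exists x. split; auto. apply Hu, ax.
  - intros y y' [x [ax <-]] [x' [ax' <-]] e. f_equal.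
    apply (scrambled_iter_injective d Hd f S n); auto.
    rewrite <- (proj2 (Hu x ax)), <- (proj2 (Hu x' ax')). exact e.
  - apply uncountable_image; auto.
  - intros y [x [ax <-]]. apply Hu, ax.
Qed.

(* If moreover [f] is continuous and [A], [B] are closed, the copy can be taken
   to be a Cantor set: the points of [B] whose [n]-th iterate lies in [f^n(A)]
   form a closed set with uncountable [f^n]-image, so it contains a Cantor set
   on which [f^n] is injective. *)
Lemma cantor_iterate_copy_in : continuous d f -> is_closed d A -> is_closed d B ->
  exists Tk, copy_inside f A n B Tk /\ cantor_set d Tk.
Proof.
  intros Hf Ac Bc. pose proof (continuous_iter d f n Hf) as Hfn.
  set (K := fun z => B z /\ img (Nat.iter n f) A (Nat.iter n f z)).
  assert (Ka : admissible d (Nat.iter n f) K).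
  { split.
    - apply closed_inter; auto. apply closed_preimage; auto.
      apply (compact_closed d Hd), image_compact, (closed_compact d Hcpt); auto.
    - apply (uncountable_sup (img (Nat.iter n f) A)).
      + intros w [x [ax <-]]. destruct (reach x ax) as [u [hu eu]].
        exists u. split; auto. split; auto. exists x; auto.
      + apply uncountable_image; auto. intros x x' ax ax'.
        apply (scrambled_iter_injective d Hd f S n); auto. }
  destruct (cantor_set_inside d Hd Hcpt (Nat.iter n f) Hfn K Ka)
    as [C [Ccantor [Cunc [CK Cinj]]]].
  exists C. split; [split; [split|split]|]; auto.
  - intros y hy. destruct (CK y hy) as [_ [x [ax e]]]. eauto.
  - intros y hy. apply (CK y hy).
Qed.

End Copies.

Lemma glue_iterate_copies {X : Type} (d : X -> X -> R) (f : X -> X) (S : X -> Prop)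
  (A B T : nat -> X -> Prop) (n : nat -> nat) :
  synd_scrambled d f S -> (forall k x, A k x -> S x) ->
  (forall k j x, A k x -> A j x -> k = j) ->
  (forall U, is_open d U -> nonempty U -> exists k, forall y, B k y -> U y) ->
  (forall k, copy_inside f (A k) (n k) (B k) (T k)) ->
  c_dense d (fun y => exists k, T k y) /\ synd_scrambled d f (fun y => exists k, T k y) /\
  (forall eps, synd_eps_scrambled d f S eps ->
               synd_eps_scrambled d f (fun y => exists k, T k y) eps).
Proof.
  intros HS A_sub A_disj basis HT.
  assert (cd : c_dense d (fun y => exists k, T k y)).
  { apply c_dense_union; [apply HT|]. intros U HU hne.
    destruct (basis U HU hne) as [k hk]. exists k. intros y hy. apply hk, (HT k), hy. }
  assert (two : exists y y', (exists k, T k y) /\ (exists k, T k y') /\ y <> y').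
  { destruct (uncountable_two_points _ (proj1 (proj2 (HT 0%nat)))) as [y [y' [h1 [h2 h3]]]].
    exists y, y'; eauto. }
  assert (sh := iterate_copies_shadow f S A T n A_sub A_disj (fun k => proj1 (HT k))).
  split; [exact cd|]. split.
  - exact (shadow_scrambled d f S _ HS two sh).
  - intros eps He. exact (shadow_eps_scrambled d f S _ eps He two sh).
Qed.

Theorem lemma3p10 (X : Type) (d : X -> X -> R) (f : X -> X)
  (Hd : is_metric d) (Hcpt : is_compact d (fun _ => True))
  (Hf : continuous d f) (S : X -> Prop)
  (HSunc : uncountable_set S) (HSscr : synd_scrambled d f S)
  (HSU : forall U, is_open d U -> nonempty U ->
     exists n : nat, forall x, S x -> exists u, U u /\ Nat.iter n f u = Nat.iter n f x) :
  (exists T, c_dense d T /\ synd_scrambled d f T /\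
     (forall eps, synd_eps_scrambled d f S eps -> synd_eps_scrambled d f T eps)) /\
  (cantor_set d S ->
   exists T, c_dense d T /\ synd_scrambled d f T /\ dense d T /\ mycielski_set d T /\
     (forall eps, synd_eps_scrambled d f S eps -> synd_eps_scrambled d f T eps)).
Proof.
  destruct (uncountable_nonempty S HSunc) as [x0 _].
  destruct (closed_ball_basis d Hd Hcpt x0) as [c [r [r_pos basis]]].
  set (B := fun k y => d (c k) y <= r k).
  destruct (uncountable_partition d Hd Hcpt S HSunc) as [A [A_unc [A_sub [A_disj A_closed]]]].
  destruct (choice (fun k m => forall x, S x ->
              exists u, d (c k) u < r k /\ Nat.iter m f u = Nat.iter m f x)) as [n Hn].
  { intros k. apply HSU; [apply open_ball; auto|]. exists (c k). rewrite d_refl; auto. }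
  assert (reach : forall k x, A k x -> exists u, B k u /\ Nat.iter (n k) f u = Nat.iter (n k) f x).
  { intros k x ax. destruct (Hn k x (A_sub k x ax)) as [u [hu e]].
    exists u. split; auto. unfold B. lra. }
  split.
  - destruct (choice (fun k Tk => copy_inside f (A k) (n k) (B k) Tk)) as [T HT].
    { intros k. exact (iterate_copy_in d Hd f S (A k) (B k) (n k) HSscr (A_sub k) (A_unc k)
        (reach k)). }
    exists (fun y => exists k, T k y).
    exact (glue_iterate_copies d f S A B T n HSscr A_sub A_disj basis HT).
  - intros Scantor.
    assert (Sc : is_closed d S) by apply (compact_closed d Hd), Scantor.
    destruct (choice (fun k Tk => copy_inside f (A k) (n k) (B k) Tk /\ cantor_set d Tk))
      as [T HT].
    { intros k. exact (cantor_iterate_copy_in d Hd Hcpt f S (A k) (B k) (n k) HSscr (A_sub k)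
        (A_unc k) (reach k) Hf (A_closed Sc k) (closed_ball d Hd (c k) (r k))). }
    destruct (glue_iterate_copies d f S A B T n HSscr A_sub A_disj basis (fun k => proj1 (HT k)))
      as [cd [scr eps]].
    exists (fun y => exists k, T k y). repeat (split; [assumption|]).
    split; [exact (c_dense_dense d _ cd)|]. split; [|exact eps].
    exists T. split; [intros k; apply HT | tauto].
Qed.
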